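(* Let $f:T\to T'$ be a homomorphism of pre-trusses. (1) For all $z\in\operatorname{im}f$, $f^{-1}(z)$ is a paragon in $T$. Moreover, if $P'$ is a paragon in the pre-truss $\operatorname{im}f$, then $f^{-1}(P')$ is a paragon in $T$. (2) If $P$ is a paragon in $T$, then $f(P)$ is a paragon in $\operatorname{im}f$.
   Context: A heap is a set with a ternary operation $[-,-,-]$ satisfying $[a_1,a_2,[a_3,a_4,a_5]]=[[a_1,a_2,a_3],a_4,a_5]$ and $[a,a,b]=b=[b,a,a]$. A pre-truss is a heap with an associative binary operation; a homomorphism of pre-trusses preserves both the ternary operation and the multiplication; its image is a pre-truss. A normal sub-heap is a non-empty subset $S$ closed under $[-,-,-]$ with $[[a,e,s],a,e]\in S$ for all $a$ and $e,s\in S$; $a\sim_S b$ iff $[a,b,s]\in S$ for some (equivalently all) $s\in S$. A sub-heap $S$ is closed if $[ts',ts,s]\in S$ and $[s't,st,s]\in S$ for all $s,s'\in S$ and $t$ in the pre-truss. A paragon is a non-empty normal sub-heap $P$ such that every equivalence class of $\sim_P$ is a closed sub-heap. *)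

From Stdlib Require Import ProofIrrelevance.
Set Implicit Arguments.

Record pretruss := PreTruss {
  car :> Type;
  tern : car -> car -> car -> car;
  mul : car -> car -> car;
  tern_assoc : forall a1 a2 a3 a4 a5,
      tern a1 a2 (tern a3 a4 a5) = tern (tern a1 a2 a3) a4 a5;
  tern_malcev_l : forall a b, tern a a b = b;
  tern_malcev_r : forall a b, tern b a a = b;
  mul_assoc : forall a b c, mul a (mul b c) = mul (mul a b) c
}.
Arguments tern {p}.
Arguments mul {p}.

Definition is_hom {T T' : pretruss} (f : T -> T') : Prop :=
  (forall a b c, f (tern a b c) = tern (f a) (f b) (f c)) /\
  (forall a b, f (mul a b) = mul (f a) (f b)).

Definition subset (T : pretruss) := T -> Prop.

Definition sub_heap {T : pretruss} (S : subset T) : Prop :=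
  (exists s, S s) /\ (forall a b c, S a -> S b -> S c -> S (tern a b c)).

Definition normal_sub_heap {T : pretruss} (S : subset T) : Prop :=
  sub_heap S /\
  (forall a e s, S e -> S s -> S (tern (tern a e s) a e)).

Definition sim {T : pretruss} (S : subset T) (a b : T) : Prop :=
  exists s, S s /\ S (tern a b s).

Definition sim_class {T : pretruss} (S : subset T) (a : T) : subset T :=
  fun b => sim S a b.

Definition closed_sub_heap {T : pretruss} (S : subset T) : Prop :=
  sub_heap S /\
  (forall s s' t, S s -> S s' ->
      S (tern (mul t s') (mul t s) s) /\ S (tern (mul s' t) (mul s t) s)).

Definition paragon {T : pretruss} (P : subset T) : Prop :=
  (exists p, P p) /\ normal_sub_heap P /\
  (forall a, closed_sub_heap (sim_class P a)).

Section Image.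
Variables (T T' : pretruss) (f : T -> T') (hf : is_hom f).

Definition im_car := { y : T' | exists x, f x = y }.

Definition im_of (x : T) : im_car := exist _ (f x) (ex_intro _ x eq_refl).

Lemma im_tern_ok (a b c : im_car) :
  exists x, f x = tern (proj1_sig a) (proj1_sig b) (proj1_sig c).
Proof.
destruct a as [a [xa <-]], b as [b [xb <-]], c as [c [xc <-]]; simpl.
exists (tern xa xb xc). apply (proj1 hf).
Qed.

Lemma im_mul_ok (a b : im_car) :
  exists x, f x = mul (proj1_sig a) (proj1_sig b).
Proof.
destruct a as [a [xa <-]], b as [b [xb <-]]; simpl.
exists (mul xa xb). apply (proj2 hf).
Qed.

Definition im_tern (a b c : im_car) : im_car :=
  exist _ _ (im_tern_ok a b c).
Definition im_mul (a b : im_car) : im_car :=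
  exist _ _ (im_mul_ok a b).


Lemma im_eq (a b : im_car) : proj1_sig a = proj1_sig b -> a = b.
Proof.
destruct a, b; simpl; intros ->. f_equal. apply proof_irrelevance.
Qed.

Definition im_truss : pretruss.
Proof.
refine (@PreTruss im_car im_tern im_mul _ _ _ _);
  intros; apply im_eq; simpl.
- apply tern_assoc.
- apply tern_malcev_l.
- apply tern_malcev_r.
- apply mul_assoc.
Defined.
End Image.
Arguments im_of {T T'} f x.
Arguments im_truss {T T' f} hf.

(* Paragons pull back along homomorphisms because [~] pulls back: two elements
   are related by the preimage of [Q] exactly when their images are related by
   [Q], so every class of the preimage is the preimage of a class, and closed
   sub-heaps pull back.  A fibre is the preimage of a singleton, which is a
   paragon whose classes are singletons.  Along a surjective homomorphism the
   classes of the image of [P] are the images of the classes of [P], by the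
   heap identity [[a,[b,c,a],b] = c]; images of closed sub-heaps are closed
   because every element of the codomain is an image. *)
From Stdlib Require Import FunctionalExtensionality PropExtensionality.
Set Implicit Arguments.

Definition preimage {T U : pretruss} (g : T -> U) (Q : subset U) : subset T :=
  fun x => Q (g x).

Definition image {T U : pretruss} (g : T -> U) (P : subset T) : subset U :=
  fun y => exists x, P x /\ g x = y.

Lemma subset_ext {T : pretruss} (S S' : subset T) :
  (forall x, S x <-> S' x) -> S = S'.
Proof.
intro E. extensionality x. apply propositional_extensionality, E.
Qed.

Section HeapLaws.
Variable T : pretruss.

Lemma tern_assoc_mid (a b c d e : T) :
  tern a (tern b c d) e = tern (tern a d c) b e.
Proof.
assert (E : tern (tern a d c) b (tern b c d) = a).
{ rewrite tern_assoc, tern_malcev_r, <- tern_assoc, tern_malcev_l, tern_malcev_r.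
  reflexivity. }
rewrite <- E at 1. rewrite <- tern_assoc, tern_malcev_l. reflexivity.
Qed.

Lemma tern_sandwich (a b c : T) : tern a (tern b c a) b = c.
Proof. rewrite tern_assoc_mid, tern_malcev_l. apply tern_malcev_r. Qed.

Lemma tern_cancel (x y z : T) : tern x y z = z -> x = y.
Proof.
intro H.
assert (E : tern (tern x y z) z y = y) by (rewrite H; apply tern_malcev_l).
rewrite <- tern_assoc, tern_malcev_l, tern_malcev_r in E. exact E.
Qed.

Lemma sub_heap_tern_witness (S : subset T) (x y q r : T) :
  sub_heap S -> S q -> S (tern x y q) -> S r -> S (tern x y r).
Proof.
intros [_ HS] Hq Hxyq Hr.
replace (tern x y r) with (tern (tern x y q) q r) by
  (rewrite <- tern_assoc, tern_malcev_l; reflexivity).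
apply HS; assumption.
Qed.

Lemma sim_singleton (z a b : T) : sim (fun u => u = z) a b <-> a = b.
Proof.
split.
- intros [s [-> H]]. exact (tern_cancel _ _ H).
- intros <-. exists z. split; [reflexivity | apply tern_malcev_l].
Qed.

Lemma closed_sub_heap_singleton (z : T) : closed_sub_heap (fun u => u = z).
Proof.
split; [split|].
- exists z. reflexivity.
- intros a b c -> -> ->. apply tern_malcev_l.
- intros s s' t -> ->. split; apply tern_malcev_l.
Qed.

Lemma paragon_singleton (z : T) : paragon (fun u => u = z).
Proof.
split; [exists z; reflexivity | split; [split|]].
- exact (proj1 (closed_sub_heap_singleton z)).
- intros a e s -> ->. rewrite tern_malcev_r. apply tern_malcev_l.
- intro a.
  replace (sim_class (fun u => u = z) a) with (fun u : T => u = a).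
  + apply closed_sub_heap_singleton.
  + apply subset_ext. intro b. unfold sim_class. rewrite sim_singleton.
    split; intros ->; reflexivity.
Qed.
End HeapLaws.

Section Preimage.
Variables (T U : pretruss) (g : T -> U) (hg : is_hom g).

Lemma sub_heap_preimage (S : subset U) :
  sub_heap S -> (exists x, S (g x)) -> sub_heap (preimage g S).
Proof.
intros [_ HS] Hne. split; [exact Hne|].
intros a b c Ha Hb Hc. unfold preimage. rewrite (proj1 hg). apply HS; assumption.
Qed.

Lemma normal_sub_heap_preimage (S : subset U) :
  normal_sub_heap S -> (exists x, S (g x)) -> normal_sub_heap (preimage g S).
Proof.
intros [Hsh HS] Hne. split; [apply sub_heap_preimage; assumption|].
intros a e s He Hs. unfold preimage. rewrite !(proj1 hg). apply HS; assumption.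
Qed.

Lemma closed_sub_heap_preimage (S : subset U) :
  closed_sub_heap S -> (exists x, S (g x)) -> closed_sub_heap (preimage g S).
Proof.
intros [Hsh HS] Hne. split; [apply sub_heap_preimage; assumption|].
intros s s' t Hs Hs'. unfold preimage. rewrite !(proj1 hg), !(proj2 hg).
apply HS; assumption.
Qed.

Lemma sim_preimage (Q : subset U) (a b : T) :
  sub_heap Q -> (exists x, Q (g x)) ->
  sim (preimage g Q) a b <-> sim Q (g a) (g b).
Proof.
intros HQ [p Hp]. unfold sim, preimage. split.
- intros [s [Hs H]]. exists (g s). rewrite (proj1 hg) in H. split; assumption.
- intros [q [Hq H]]. exists p. split; [assumption|].
  rewrite (proj1 hg). exact (sub_heap_tern_witness _ _ _ _ HQ Hq H Hp).
Qed.

Lemma paragon_preimage (Q : subset U) :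
  paragon Q -> (exists x, Q (g x)) -> paragon (preimage g Q).
Proof.
intros [_ [HQn HQc]] Hne.
assert (HQsh : sub_heap Q) by exact (proj1 HQn).
split; [exact Hne | split; [apply normal_sub_heap_preimage; assumption|]].
intro a.
replace (sim_class (preimage g Q) a) with (preimage g (sim_class Q (g a))) by
  (apply subset_ext; intro b; symmetry; apply sim_preimage; assumption).
apply closed_sub_heap_preimage; [apply HQc|].
destruct Hne as [p Hp]. exists a, (g p). split; [assumption|].
rewrite tern_malcev_l. assumption.
Qed.
End Preimage.

Section Image.
Variables (T U : pretruss) (g : T -> U) (hg : is_hom g).
Hypothesis g_surj : forall y, exists x, g x = y.

Lemma sub_heap_image (S : subset T) : sub_heap S -> sub_heap (image g S).
Proof.
intros [[s Hs] HS]. split; [exists (g s), s; split; [assumption | reflexivity]|].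
intros a b c [x1 [H1 <-]] [x2 [H2 <-]] [x3 [H3 <-]].
exists (tern x1 x2 x3). split; [apply HS; assumption | apply (proj1 hg)].
Qed.

Lemma normal_sub_heap_image (S : subset T) :
  normal_sub_heap S -> normal_sub_heap (image g S).
Proof.
intros [Hsh HS]. split; [apply sub_heap_image; assumption|].
intros a e s [xe [He <-]] [xs [Hs <-]]. destruct (g_surj a) as [xa <-].
exists (tern (tern xa xe xs) xa xe). split; [apply HS; assumption|].
rewrite !(proj1 hg). reflexivity.
Qed.

Lemma closed_sub_heap_image (S : subset T) :
  closed_sub_heap S -> closed_sub_heap (image g S).
Proof.
intros [Hsh HS]. split; [apply sub_heap_image; assumption|].
intros s s' t [x [Hx <-]] [x' [Hx' <-]]. destruct (g_surj t) as [xt <-].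
destruct (HS x x' xt Hx Hx') as [Hl Hr]. split.
- exists (tern (mul xt x') (mul xt x) x). split; [assumption|].
  rewrite (proj1 hg), !(proj2 hg). reflexivity.
- exists (tern (mul x' xt) (mul x xt) x). split; [assumption|].
  rewrite (proj1 hg), !(proj2 hg). reflexivity.
Qed.

Lemma sim_class_image (P : subset T) (a : T) :
  sim_class (image g P) (g a) = image g (sim_class P a).
Proof.
apply subset_ext. intro y. unfold sim_class, sim, image. split.
- intros [s [[p1 [Hp1 <-]] [p2 [Hp2 Hy]]]].
  exists (tern p1 p2 a). split.
  + exists p1. split; [assumption|]. rewrite tern_sandwich. assumption.
  + rewrite !(proj1 hg), Hy. apply tern_sandwich.
- intros [x [[s [Hs Hx]] <-]]. exists (g s). split.
  + exists s. split; [assumption | reflexivity].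
  + exists (tern a x s). split; [assumption | apply (proj1 hg)].
Qed.

Lemma paragon_image (P : subset T) : paragon P -> paragon (image g P).
Proof.
intros [[p Hp] [HPn HPc]].
split; [exists (g p), p; split; [assumption | reflexivity]|].
split; [apply normal_sub_heap_image; assumption|].
intro y. destruct (g_surj y) as [a <-]. rewrite sim_class_image.
apply closed_sub_heap_image, HPc.
Qed.
End Image.

Section ImageTruss.
Variables (T T' : pretruss) (f : T -> T') (hf : is_hom f).

Lemma is_hom_im_of : is_hom (T' := im_truss hf) (im_of f).
Proof.
split; intros; apply im_eq; [apply (proj1 hf) | apply (proj2 hf)].
Qed.

Lemma im_of_surj (y : im_truss hf) : exists x, im_of f x = y.
Proof.
destruct y as [y [x <-]]. exists x. apply im_eq. reflexivity.
Qed.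

Lemma image_im_ofE (P : subset T) :
  (fun y : im_truss hf => exists x, P x /\ f x = proj1_sig y) = image (U := im_truss hf) (im_of f) P.
Proof.
apply subset_ext. intro y. unfold image. split.
- intros [x [Hx E]]. exists x. split; [assumption | apply im_eq, E].
- intros [x [Hx <-]]. exists x. split; [assumption | reflexivity].
Qed.
End ImageTruss.

Theorem lemma3p13 (T T' : pretruss) (f : T -> T') (hf : is_hom f) :
  (* (1) fibres of points of the image are paragons *)
  (forall z : T', (exists x, f x = z) -> paragon (fun x : T => f x = z)) /\
  (* (1) preimages of paragons of im f are paragons *)
  (forall P' : subset (im_truss hf),
      paragon P' -> paragon (fun x : T => P' (im_of f x))) /\
  (* (2) images of paragons are paragons in im f *)
  (forall P : subset T,
      paragon P ->
      paragon (fun y : im_truss hf => exists x, P x /\ f x = proj1_sig y)).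
Proof.
split; [|split].
- intros z Hz. exact (paragon_preimage hf (paragon_singleton _ z) Hz).
- intros P' HP'. apply (paragon_preimage (is_hom_im_of hf) HP').
  destruct HP' as [[y Hy] _]. destruct (im_of_surj y) as [x <-].
  exists x. exact Hy.
- intros P HP. rewrite image_im_ofE.
  exact (paragon_image (is_hom_im_of hf) (@im_of_surj _ _ _ hf) HP).
Qed.
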